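(* Let $J$ be a positive integer, $\Delta>0$, and $w_j=(j-\tfrac12)\Delta$ for $j=1,\dots,J$. For $x\in(0,1]$, $w\in\mathbb R$ and $j\in\{1,\dots,J\}$ define $\tau(x,w,j)\in\mathbb R^2$ by $$\tau(x,w,j)=\left[\cos(w\ln x)\sqrt{2x\int_{(j-1)\Delta}^{j\Delta}\rho(w')dw'},\ \sin(w\ln x)\sqrt{2x\int_{(j-1)\Delta}^{j\Delta}\rho(w')dw'}\right].$$ Then for all $x,y\in(0,1]$, $$\left|\int_{-\Delta J}^{\Delta J}\Phi_w(x)^*\Phi_w(y)\,dw-\left\langle\bigoplus_{j=1}^J\tau(x,w_j,j),\ \bigoplus_{j=1}^J\tau(y,w_j,j)\right\rangle\right|\le 2\Delta,$$ where $\bigoplus$ denotes concatenation of vectors and $\langle\cdot,\cdot\rangle$ the Euclidean inner product.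
   Context: $\rho(w)=\frac{2\,\mathrm{sech}(\pi w)}{1+4w^2}$; $\Phi_w(x)=e^{-iw\ln x}\sqrt{x\rho(w)}$; ${}^*$ denotes complex conjugation. *)

From Stdlib Require Import Reals Lra Classical ClassicalEpsilon.
Open Scope R_scope.

(* Total Riemann integral: the value of RiemannInt when f is Riemann
   integrable on [a,b] (proof-independent, RiemannInt_P5); unspecified otherwise (the integrands below are continuous, so this is the usual integral). *)
Definition Rint (f : R -> R) (a b : R) : R :=
  epsilon (inhabits 0)
    (fun v => exists pr : Riemann_integrable f a b, RiemannInt pr = v).

Definition sech (t : R) : R := 2 / (exp t + exp (- t)).

Definition rho (w : R) : R := 2 * sech (PI * w) / (1 + 4 * w ^ 2).

(* Phi_w(x) = e^{-i w ln x} sqrt(x rho(w)), as (real part, imaginary part) *)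
Definition Phi_re (w x : R) : R := cos (w * ln x) * sqrt (x * rho w).
Definition Phi_im (w x : R) : R := - sin (w * ln x) * sqrt (x * rho w).

(* Phi_w(x)^* Phi_w(y) = (a - i b)(c + i d), a+ib = Phi_w(x), c+id = Phi_w(y) *)
Definition conjprod_re (x y w : R) : R :=
  Phi_re w x * Phi_re w y + Phi_im w x * Phi_im w y.
Definition conjprod_im (x y w : R) : R :=
  Phi_re w x * Phi_im w y - Phi_im w x * Phi_re w y.

Definition tau (Delta x w : R) (j : nat) : R * R :=
  let s := sqrt (2 * x * Rint rho ((INR j - 1) * Delta) (INR j * Delta)) in
  (cos (w * ln x) * s, sin (w * ln x) * s).

Definition inner2 (u v : R * R) : R := fst u * fst v + snd u * snd v.

Definition wj (Delta : R) (j : nat) : R := (INR j - 1 / 2) * Delta.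

(* < (+)_{j=1}^J tau(x,w_j,j), (+)_{j=1}^J tau(y,w_j,j) > : the Euclidean inner
   product of the concatenations, i.e. the sum over j = 1..J of the 2D inner products *)
Definition concat_inner (J : nat) (Delta x y : R) : R :=
  sum_f_R0 (fun k => inner2 (tau Delta x (wj Delta (S k)) (S k))
                            (tau Delta y (wj Delta (S k)) (S k))) (J - 1).

Definition cmod (re im : R) : R := sqrt (re ^ 2 + im ^ 2).

(** The kernel is [Phi_w(x)^* Phi_w(y) = sqrt(x y) rho(w) e^{i w L}] with
    [L = ln x - ln y]. Its imaginary part is odd in [w] and integrates to zero;
    its real part is even, so the integral is twice an integral over
    [[0, Delta J]]. The inner product of the [tau] vectors is exactly twice the
    midpoint rule for [sqrt(x y) cos(w L)] against the weight [rho] on the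
    cells [[(j-1) Delta, j Delta]]. Since [w |-> cos(w L)] is [|L|]-Lipschitz,
    the error is at most [sqrt(x y) |L| Delta int_0^oo rho], and
    [sqrt(x y) |L| <= 2/e] on [(0,1]^2] while [int_0^oo rho <= pi/2], giving
    [pi Delta / e <= 2 Delta]. *)

From Coquelicot Require Import Coquelicot.
From Stdlib Require Import Reals Lra Lia ClassicalEpsilon.
Open Scope R_scope.

Lemma Rint_eq_RInt (f : R -> R) a b : ex_RInt f a b -> Rint f a b = RInt f a b.
Proof.
  intros Hf. unfold Rint.
  destruct (epsilon_spec (inhabits 0)
              (fun v => exists pr : Riemann_integrable f a b, RiemannInt pr = v))
    as [pr <-].
  { exists (RiemannInt (ex_RInt_Reals_0 f a b Hf)), (ex_RInt_Reals_0 f a b Hf).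
    reflexivity. }
  symmetry. apply RInt_Reals.
Qed.

Lemma ex_RInt_continuous_R (f : R -> R) a b :
  (forall w, continuous f w) -> ex_RInt f a b.
Proof. intros Hf. apply (ex_RInt_continuous (V:=R_CompleteNormedModule)); auto. Qed.

Lemma Rint_ext_RInt (f g : R -> R) a b :
  (forall w, f w = g w) -> (forall w, continuous g w) -> Rint f a b = RInt g a b.
Proof.
  intros Hfg Hg. rewrite Rint_eq_RInt.
  - apply RInt_ext. intros; apply Hfg.
  - apply (ex_RInt_ext g); [intros; symmetry; apply Hfg|].
    apply ex_RInt_continuous_R; exact Hg.
Qed.

Lemma RInt_reflect (f : R -> R) T : (forall w, continuous f w) ->
  RInt f (- T) 0 = RInt (fun w => f (- w)) 0 T.
Proof.
  intros Hf.
  pose proof (is_RInt_comp_opp f 0 T _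
               (RInt_correct (V:=R_CompleteNormedModule) f (- 0) (- T)
                  (ex_RInt_continuous_R f _ _ Hf))) as Hl.
  apply (is_RInt_unique (V:=R_CompleteNormedModule)) in Hl.
  rewrite Ropp_0 in Hl.
  rewrite <- (opp_RInt_swap f) by (apply ex_RInt_continuous_R; auto).
  rewrite <- Hl, (RInt_opp (V:=R_CompleteNormedModule) (fun w => f (- w))).
  - apply opp_opp.
  - apply ex_RInt_continuous_R. intros w.
    apply (continuous_comp (U:=R_UniformSpace) (V:=R_UniformSpace) Ropp); auto.
    apply (continuous_opp (V:=R_NormedModule) (fun y => y)), continuous_id.
Qed.

Lemma RInt_symmetric_even (f : R -> R) T :
  (forall w, continuous f w) -> (forall w, f (- w) = f w) ->
  RInt f (- T) T = 2 * RInt f 0 T.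
Proof.
  intros Hf Heven.
  rewrite <- (RInt_Chasles f (- T) 0 T) by (apply ex_RInt_continuous_R; auto).
  rewrite RInt_reflect by auto.
  rewrite (RInt_ext (fun w => f (- w)) f) by (intros; apply Heven).
  unfold plus; simpl. ring.
Qed.

Lemma RInt_symmetric_odd (f : R -> R) T :
  (forall w, continuous f w) -> (forall w, f (- w) = - f w) ->
  RInt f (- T) T = 0.
Proof.
  intros Hf Hodd.
  rewrite <- (RInt_Chasles f (- T) 0 T) by (apply ex_RInt_continuous_R; auto).
  rewrite RInt_reflect by auto.
  rewrite (RInt_ext (fun w => f (- w)) (fun w => opp (f w))) by (intros; apply Hodd).
  rewrite (RInt_opp (V:=R_CompleteNormedModule)) by (apply ex_RInt_continuous_R; auto).
  unfold plus, opp; simpl. ring.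
Qed.

Lemma RInt_uniform_partition (f : R -> R) D m : (forall w, continuous f w) ->
  RInt f 0 (INR (S m) * D) = sum_f_R0 (fun k => RInt f (INR k * D) (INR (S k) * D)) m.
Proof.
  intros Hf. induction m as [|m IH].
  - simpl. rewrite Rmult_0_l. reflexivity.
  - rewrite tech5, <- IH.
    symmetry. apply (RInt_Chasles (V:=R_CompleteNormedModule));
      apply ex_RInt_continuous_R; auto.
Qed.

Lemma RInt_weighted_approx (f g : R -> R) a b c M : a <= b ->
  (forall w, continuous f w) -> (forall w, continuous g w) -> (forall w, 0 <= g w) ->
  (forall w, a < w < b -> Rabs (f w - c) <= M) ->
  Rabs (RInt (fun w => f w * g w) a b - c * RInt g a b) <= M * RInt g a b.
Proof.
  intros Hab Hf Hg Hg0 Hfc.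
  assert (Hg_int : ex_RInt g a b) by (apply ex_RInt_continuous_R; exact Hg).
  assert (Hfg_int : ex_RInt (fun w => f w * g w) a b).
  { apply ex_RInt_continuous_R. intros w. apply (continuous_mult (K:=R_AbsRing)); auto. }
  assert (Hkg_int : forall k, ex_RInt (fun w => k * g w) a b)
    by (intros k; apply (ex_RInt_scal (V:=R_NormedModule)), Hg_int).
  assert (Hscal : forall k, RInt (fun w => k * g w) a b = k * RInt g a b)
    by (intros k; apply (RInt_scal (V:=R_CompleteNormedModule)), Hg_int).
  assert (Hupper : RInt (fun w => f w * g w) a b <= RInt (fun w => (c + M) * g w) a b).
  { apply RInt_le; auto.
    intros w Hw. apply Rmult_le_compat_r; auto.
    specialize (Hfc w Hw). apply Rabs_le_between in Hfc. lra. }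
  assert (Hlower : RInt (fun w => (c - M) * g w) a b <= RInt (fun w => f w * g w) a b).
  { apply RInt_le; auto.
    intros w Hw. apply Rmult_le_compat_r; auto.
    specialize (Hfc w Hw). apply Rabs_le_between in Hfc. lra. }
  rewrite !Hscal in Hupper, Hlower.
  apply Rabs_le. lra.
Qed.

Lemma RInt_weighted_midpoint (f g : R -> R) C D m : 0 <= D ->
  (forall w, continuous f w) -> (forall w, continuous g w) -> (forall w, 0 <= g w) ->
  (forall u v, Rabs (f u - f v) <= C * Rabs (u - v)) ->
  Rabs (RInt (fun w => f w * g w) 0 (INR (S m) * D)
        - sum_f_R0 (fun k => f ((INR (S k) - 1 / 2) * D) * RInt g (INR k * D) (INR (S k) * D)) m)
  <= C * (D / 2) * RInt g 0 (INR (S m) * D).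
Proof.
  intros HD Hf Hg Hg0 Hlip.
  assert (Hfg : forall w, continuous (fun w => f w * g w) w).
  { intros w. apply (continuous_mult (K:=R_AbsRing)); auto. }
  rewrite !RInt_uniform_partition by auto.
  rewrite <- minus_sum, scal_sum.
  eapply Rle_trans; [apply Rabs_triang_gen|].
  apply sum_Rle. intros k _. rewrite (Rmult_comm (RInt g _ _)).
  apply RInt_weighted_approx; auto.
  - rewrite S_INR. lra.
  - intros w Hw. eapply Rle_trans; [apply Hlip|].
    assert (HC : 0 <= C).
    { specialize (Hlip 1 0). pose proof (Rabs_pos (f 1 - f 0)).
      rewrite Rminus_0_r, Rabs_R1 in Hlip. lra. }
    apply Rmult_le_compat_l; auto.
    rewrite S_INR in Hw |- *. apply Rabs_le. lra.
Qed.

Lemma cos_mul_lipschitz K L u v : 0 <= K ->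
  Rabs (K * cos (u * L) - K * cos (v * L)) <= K * Rabs L * Rabs (u - v).
Proof.
  intros HK.
  destruct (MVT_abs cos (fun c => - sin c) (v * L) (u * L)) as [c [Hmvt _]].
  { intros; apply derivable_pt_lim_cos. }
  replace (u * L - v * L) with (L * (u - v)) in Hmvt by ring.
  rewrite <- Rmult_minus_distr_l, Rabs_mult, Hmvt, Rabs_Ropp, Rabs_mult, (Rabs_pos_eq K)
    by exact HK.
  rewrite Rmult_assoc. apply Rmult_le_compat_l; [exact HK|].
  assert (Hsin : Rabs (sin c) <= 1) by (apply Rabs_le; apply SIN_bound).
  pose proof (Rmult_le_pos _ _ (Rabs_pos L) (Rabs_pos (u - v))).
  nra.
Qed.

Lemma sqrt_mul_sqrt_mul x y r : 0 <= x -> 0 <= y -> 0 <= r ->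
  sqrt (x * r) * sqrt (y * r) = sqrt (x * y) * r.
Proof.
  intros Hx Hy Hr. rewrite !sqrt_mult by nra.
  replace (sqrt x * sqrt r * (sqrt y * sqrt r)) with (sqrt x * sqrt y * (sqrt r * sqrt r))
    by ring.
  rewrite sqrt_sqrt; auto.
Qed.

(** [sqrt y * (- ln y)] is maximal at [y = e^{-2}]. *)
Lemma sqrt_mul_opp_ln_le y : 0 < y -> sqrt y * - ln y <= 2 / exp 1.
Proof.
  intros Hy. set (s := sqrt y).
  assert (Hs : 0 < s) by (apply sqrt_lt_R0; exact Hy).
  assert (He : 0 < exp 1) by apply exp_pos.
  assert (Hln : ln y = 2 * ln s).
  { rewrite <- (sqrt_sqrt y) by lra. rewrite ln_mult by auto. fold s. ring. }
  (* [ln t <= t - 1] at [t = 1 / (e s)] *)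
  pose proof (exp_ineq1_le (ln (/ (exp 1 * s)))) as Hineq.
  rewrite exp_ln, ln_Rinv, ln_mult, ln_exp in Hineq
    by (try apply Rinv_0_lt_compat; nra).
  assert (Hinv : s * / (exp 1 * s) = / exp 1) by (field; lra).
  rewrite Hln. unfold Rdiv. nra.
Qed.

Lemma sqrt_mul_abs_ln_diff_le x y : 0 < x <= 1 -> 0 < y <= 1 ->
  sqrt (x * y) * Rabs (ln x - ln y) <= 2 / exp 1.
Proof.
  intros Hx Hy. rewrite sqrt_mult by lra.
  assert (Hlx : ln x <= 0) by (rewrite <- ln_1; apply ln_le; lra).
  assert (Hly : ln y <= 0) by (rewrite <- ln_1; apply ln_le; lra).
  assert (Hsx : 0 < sqrt x <= 1).
  { split; [apply sqrt_lt_R0; lra|]. rewrite <- sqrt_1. apply sqrt_le_1_alt. lra. }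
  assert (Hsy : 0 < sqrt y <= 1).
  { split; [apply sqrt_lt_R0; lra|]. rewrite <- sqrt_1. apply sqrt_le_1_alt. lra. }
  pose proof (sqrt_mul_opp_ln_le x ltac:(lra)) as Hbx.
  pose proof (sqrt_mul_opp_ln_le y ltac:(lra)) as Hby.
  destruct (Rle_dec (ln x) (ln y)).
  - rewrite Rabs_left1 by lra.
    assert (sqrt y * (ln y - ln x) <= - ln x) by nra.
    replace (sqrt x * sqrt y * - (ln x - ln y)) with (sqrt x * (sqrt y * (ln y - ln x)))
      by ring.
    apply Rle_trans with (sqrt x * - ln x); [apply Rmult_le_compat_l|]; lra.
  - rewrite Rabs_right by lra.
    assert (sqrt x * (ln x - ln y) <= - ln y) by nra.
    replace (sqrt x * sqrt y * (ln x - ln y)) with (sqrt y * (sqrt x * (ln x - ln y)))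
      by ring.
    apply Rle_trans with (sqrt y * - ln y); [apply Rmult_le_compat_l|]; lra.
Qed.

Lemma exp_sum_opp_ge_2 t : 2 <= exp t + exp (- t).
Proof. pose proof (exp_ineq1_le t); pose proof (exp_ineq1_le (- t)); lra. Qed.

Lemma rho_pos w : 0 < rho w.
Proof.
  unfold rho, sech. pose proof (exp_sum_opp_ge_2 (PI * w)).
  apply Rdiv_lt_0_compat; [|nra].
  apply Rmult_lt_0_compat; [lra|]. apply Rdiv_lt_0_compat; lra.
Qed.

Lemma rho_le w : rho w <= 2 / (1 + 4 * w ^ 2).
Proof.
  unfold rho, sech. pose proof (exp_sum_opp_ge_2 (PI * w)).
  unfold Rdiv. apply Rmult_le_compat_r; [apply Rlt_le, Rinv_0_lt_compat; nra|].
  assert (2 / (exp (PI * w) + exp (- (PI * w))) <= 1); [|lra].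
  apply (Rmult_le_reg_r (exp (PI * w) + exp (- (PI * w)))); [lra|].
  unfold Rdiv. rewrite Rmult_assoc, Rinv_l by lra. lra.
Qed.

Lemma rho_opp w : rho (- w) = rho w.
Proof.
  unfold rho, sech. replace (PI * - w) with (- (PI * w)) by ring.
  rewrite Ropp_involutive, Rplus_comm. f_equal. ring.
Qed.

Lemma ex_derive_rho w : ex_derive rho w.
Proof.
  unfold rho, sech. auto_derive. pose proof (exp_sum_opp_ge_2 (PI * w)).
  repeat split; nra.
Qed.

Lemma continuous_rho w : continuous rho w.
Proof. apply (ex_derive_continuous (K:=R_AbsRing) (V:=R_NormedModule)), ex_derive_rho. Qed.

Lemma RInt_rho_ge_0 a b : a <= b -> 0 <= RInt rho a b.
Proof.
  intros Hab. apply RInt_ge_0; auto.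
  - apply ex_RInt_continuous_R, continuous_rho.
  - intros; apply Rlt_le, rho_pos.
Qed.

Lemma RInt_rho_le_PI2 T : 0 <= T -> RInt rho 0 T <= PI / 2.
Proof.
  intros HT.
  assert (Hcont : forall w, continuous (fun w => 2 / (1 + 4 * w ^ 2)) w).
  { intros w. apply (ex_derive_continuous (K:=R_AbsRing) (V:=R_NormedModule)). auto_derive. nra. }
  assert (Hatan : is_RInt (fun w => 2 / (1 + 4 * w ^ 2)) 0 T
                 (minus (atan (2 * T)) (atan (2 * 0)))).
  { apply (is_RInt_derive (V:=R_CompleteNormedModule) (fun w => atan (2 * w))); auto.
    intros w _.
    replace (2 / (1 + 4 * w ^ 2)) with (scal 2 (/ (1 + (2 * w)²))).
    2:{ unfold scal; simpl; unfold mult; simpl. unfold Rsqr. field. nra. }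
    apply (is_derive_comp atan (fun w => 2 * w)); [apply is_derive_atan|].
    auto_derive; auto. ring. }
  apply (is_RInt_unique (V:=R_CompleteNormedModule)) in Hatan.
  apply Rle_trans with (RInt (fun w => 2 / (1 + 4 * w ^ 2)) 0 T).
  - apply RInt_le; auto using ex_RInt_continuous_R, continuous_rho.
    intros; apply rho_le.
  - rewrite Hatan. unfold minus, plus, opp; simpl.
    rewrite Rmult_0_r, atan_0. pose proof (atan_bound (2 * T)). lra.
Qed.

Lemma continuous_scaled_cos_mul K L w : continuous (fun w => K * cos (w * L)) w.
Proof. apply (ex_derive_continuous (K:=R_AbsRing) (V:=R_NormedModule)). auto_derive. auto. Qed.

Lemma continuous_scaled_sin_mul K L w : continuous (fun w => K * sin (w * L)) w.
Proof. apply (ex_derive_continuous (K:=R_AbsRing) (V:=R_NormedModule)). auto_derive. auto. Qed.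

Lemma continuous_mul_rho (f : R -> R) w :
  (forall v, continuous f v) -> continuous (fun w => f w * rho w) w.
Proof. intros Hf. apply (continuous_mult (K:=R_AbsRing)); auto using continuous_rho. Qed.

Lemma conjprod_re_eq x y w : 0 < x -> 0 < y ->
  conjprod_re x y w = sqrt (x * y) * cos (w * (ln x - ln y)) * rho w.
Proof.
  intros Hx Hy. unfold conjprod_re, Phi_re, Phi_im.
  pose proof (sqrt_mul_sqrt_mul x y (rho w) ltac:(lra) ltac:(lra) (Rlt_le _ _ (rho_pos w))) as Hs.
  replace (w * (ln x - ln y)) with (w * ln x - w * ln y) by ring.
  rewrite cos_minus.
  transitivity ((cos (w * ln x) * cos (w * ln y) + sin (w * ln x) * sin (w * ln y))
                * (sqrt (x * rho w) * sqrt (y * rho w))); [ring|].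
  rewrite Hs. ring.
Qed.

Lemma conjprod_im_eq x y w : 0 < x -> 0 < y ->
  conjprod_im x y w = sqrt (x * y) * sin (w * (ln x - ln y)) * rho w.
Proof.
  intros Hx Hy. unfold conjprod_im, Phi_re, Phi_im.
  pose proof (sqrt_mul_sqrt_mul x y (rho w) ltac:(lra) ltac:(lra) (Rlt_le _ _ (rho_pos w))) as Hs.
  replace (w * (ln x - ln y)) with (w * ln x - w * ln y) by ring.
  rewrite sin_minus.
  transitivity ((sin (w * ln x) * cos (w * ln y) - cos (w * ln x) * sin (w * ln y))
                * (sqrt (x * rho w) * sqrt (y * rho w))); [ring|].
  rewrite Hs. ring.
Qed.

Lemma inner2_tau Delta x y w j : 0 < x -> 0 < y ->
  0 <= Rint rho ((INR j - 1) * Delta) (INR j * Delta) ->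
  inner2 (tau Delta x w j) (tau Delta y w j)
  = 2 * (sqrt (x * y) * cos (w * (ln x - ln y))
         * Rint rho ((INR j - 1) * Delta) (INR j * Delta)).
Proof.
  intros Hx Hy Hr. unfold inner2, tau; simpl.
  set (r := Rint rho _ _) in *.
  pose proof (sqrt_mul_sqrt_mul x y (2 * r) ltac:(lra) ltac:(lra) ltac:(lra)) as Hs.
  replace (2 * x * r) with (x * (2 * r)) by ring.
  replace (2 * y * r) with (y * (2 * r)) by ring.
  replace (w * (ln x - ln y)) with (w * ln x - w * ln y) by ring.
  rewrite cos_minus.
  transitivity ((cos (w * ln x) * cos (w * ln y) + sin (w * ln x) * sin (w * ln y))
                * (sqrt (x * (2 * r)) * sqrt (y * (2 * r)))); [ring|].
  rewrite Hs. ring.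
Qed.

Lemma Rint_conjprod_im_symmetric x y T : 0 < x -> 0 < y ->
  Rint (conjprod_im x y) (- T) T = 0.
Proof.
  intros Hx Hy.
  assert (Hc : forall w, continuous
                 (fun w => sqrt (x * y) * sin (w * (ln x - ln y)) * rho w) w).
  { intros w. apply continuous_mul_rho. intros; apply continuous_scaled_sin_mul. }
  rewrite (Rint_ext_RInt _ _ _ _ (fun w => conjprod_im_eq x y w Hx Hy) Hc).
  apply RInt_symmetric_odd; auto.
  intros w. rewrite rho_opp, Ropp_mult_distr_l_reverse, sin_neg. ring.
Qed.

Lemma Rint_conjprod_re_symmetric x y T : 0 < x -> 0 < y ->
  Rint (conjprod_re x y) (- T) T
  = 2 * RInt (fun w => sqrt (x * y) * cos (w * (ln x - ln y)) * rho w) 0 T.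
Proof.
  intros Hx Hy.
  assert (Hc : forall w, continuous
                 (fun w => sqrt (x * y) * cos (w * (ln x - ln y)) * rho w) w).
  { intros w. apply continuous_mul_rho. intros; apply continuous_scaled_cos_mul. }
  rewrite (Rint_ext_RInt _ _ _ _ (fun w => conjprod_re_eq x y w Hx Hy) Hc).
  apply RInt_symmetric_even; auto.
  intros w. rewrite rho_opp, Ropp_mult_distr_l_reverse, cos_neg. ring.
Qed.

Lemma concat_inner_midpoint m Delta x y : 0 < x -> 0 < y -> 0 <= Delta ->
  concat_inner (S m) Delta x y
  = 2 * sum_f_R0 (fun k => sqrt (x * y) * cos ((INR (S k) - 1 / 2) * Delta * (ln x - ln y))
                           * RInt rho (INR k * Delta) (INR (S k) * Delta)) m.
Proof.
  intros Hx Hy HD. unfold concat_inner. replace (S m - 1)%nat with m by lia.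
  rewrite scal_sum. apply sum_eq. intros k _.
  assert (Hcell : (INR (S k) - 1) * Delta = INR k * Delta) by (rewrite S_INR; ring).
  rewrite inner2_tau, Hcell, Rint_eq_RInt; auto using ex_RInt_continuous_R, continuous_rho.
  - unfold wj. ring.
  - rewrite Hcell, Rint_eq_RInt by auto using ex_RInt_continuous_R, continuous_rho.
    apply RInt_rho_ge_0. rewrite S_INR. nra.
Qed.

Lemma cmod_real a : cmod a 0 = Rabs a.
Proof. unfold cmod. rewrite <- sqrt_Rsqr_abs. f_equal. unfold Rsqr. ring. Qed.

Lemma PI_div_exp1_le_2 : 2 / exp 1 * (PI / 2) <= 2.
Proof.
  pose proof PI_4. pose proof (exp_ineq1_le 1).
  unfold Rdiv. apply (Rmult_le_reg_r (exp 1)); [lra|].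
  replace (2 * / exp 1 * (PI * / 2) * exp 1) with PI by (field; lra). lra.
Qed.

Theorem lemma5 (J : nat) (Delta x y : R) :
  (0 < J)%nat -> 0 < Delta ->
  0 < x <= 1 -> 0 < y <= 1 ->
  cmod (Rint (conjprod_re x y) (- (Delta * INR J)) (Delta * INR J)
          - concat_inner J Delta x y)
       (Rint (conjprod_im x y) (- (Delta * INR J)) (Delta * INR J))
  <= 2 * Delta.
Proof.
  intros HJ HD Hx Hy. destruct J as [|m]; [lia|].
  rewrite (Rmult_comm Delta).
  set (T := INR (S m) * Delta).
  assert (HT : 0 <= T) by (pose proof (pos_INR (S m)); unfold T; nra).
  rewrite Rint_conjprod_re_symmetric, Rint_conjprod_im_symmetric, concat_inner_midpoint
    by lra.
  rewrite <- Rmult_minus_distr_l, cmod_real, Rabs_mult, (Rabs_pos_eq 2) by lra.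
  set (K := sqrt (x * y)). set (L := ln x - ln y).
  assert (HK : 0 <= K) by apply sqrt_pos.
  pose proof (RInt_weighted_midpoint (fun w => K * cos (w * L)) rho (K * Rabs L) Delta m
                (Rlt_le _ _ HD) (continuous_scaled_cos_mul K L) continuous_rho
                (fun w => Rlt_le _ _ (rho_pos w))
                (fun u v => cos_mul_lipschitz K L u v HK)) as Hmid.
  cbv beta in Hmid. fold T in Hmid.
  assert (HKLI : K * Rabs L * RInt rho 0 T <= 2).
  { apply Rle_trans with (2 / exp 1 * (PI / 2)); [|apply PI_div_exp1_le_2].
    apply Rmult_le_compat; auto using RInt_rho_ge_0, RInt_rho_le_PI2.
    - apply Rmult_le_pos; [exact HK|apply Rabs_pos].
    - apply sqrt_mul_abs_ln_diff_le; assumption. }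
  pose proof (RInt_rho_ge_0 0 T HT).
  nra.
Qed.
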